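(* Let $X$ be a compact nonpositively curved cube complex and $(\tilde Y,\phi)$ a quasiline in $\tilde X$. Then: (1) there is a constant $D$ such that $\operatorname{diam}(H)\le D$ for every hyperplane $H$ of $\tilde Y$ that is not trivial; (2) there is a constant $K$ such that for every half-essential hyperplane $H$ of $\tilde Y$, its shallow halfspace $H^\epsilon$ satisfies $\operatorname{diam}(H^\epsilon)\le K$; (3) there is an integer $d$ such that for every essential hyperplane $H$ of $\tilde Y$, the hyperplanes $H$ and $\phi^d(H)$ do not intersect, and every hyperplane of $\tilde Y$ crossing both of them is trivial; (4) $\tilde Y$ has only finitely many trivial hyperplanes. The constants $K,D,d$ depend only on $(\tilde Y,\phi)$. Moreover, any constants $\overline D\ge D$, $\overline K\ge K$ and any integer $\overline d\ge d$ also satisfy (1), (2), (3) respectively.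
   Context: $\tilde X$ is the universal cover of $X$. A quasiline in $\tilde X$ is a pair $(\tilde Y,\phi)$ with $\tilde Y\subset\tilde X$ a convex subcomplex and $\phi\in\pi_1X$ nontrivial such that $\langle\phi\rangle$ acts cocompactly on $\tilde Y$. Hyperplanes of $\tilde Y$ and their halfspaces are taken in the CAT(0) cube complex $\tilde Y$. A halfspace of $H$ is deep if it contains points arbitrarily far from $H$, shallow otherwise. $H$ is essential if both halfspaces are deep, trivial if both are shallow, half-essential if exactly one is deep. *)

(* (boot only) + Stdlib relation closures.
   A CAT(0) cube complex is encoded by its 1-skeleton, a median graph
   (vertex type V, adjacency relation adj). *)
From mathcomp Require Import all_boot.
From Stdlib Require Import Relation_Operators.
From Stdlib Require List.
Set Implicit Arguments. Unset Strict Implicit. Unset Printing Implicit Defensive.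

(* within adj Y n x y : there is an edge path of length <= n from x to y
   all of whose vertices after x lie in Y  (i.e. d_Y(x,y) <= n). *)
Fixpoint within (V : Type) (adj : V -> V -> Prop) (Y : V -> Prop)
    (n : nat) (x y : V) : Prop :=
  match n with
  | 0 => x = y
  | n'.+1 => x = y \/ exists z, Y z /\ adj x z /\ within adj Y n' z y
  end.

Definition allV (V : Type) : V -> Prop := fun _ => True.

Definition is_dist (V : Type) (adj : V -> V -> Prop) (x y : V) (n : nat) :=
  within adj (@allV V) n x y /\ forall m, within adj (@allV V) m x y -> n <= m.

Definition in_interval (V : Type) (adj : V -> V -> Prop) (x y m : V) :=
  exists a b c, [/\ is_dist adj x m a, is_dist adj m y b, is_dist adj x y c
                 & a + b = c].

Definition median_graph (V : Type) (adj : V -> V -> Prop) : Prop :=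
  [/\ (forall x y, adj x y -> adj y x),
      (forall x, ~ adj x x),
      (forall x y, exists n, within adj (@allV V) n x y)
    & (forall x y z, exists m,
         [/\ in_interval adj x y m, in_interval adj y z m, in_interval adj x z m
           & forall m', in_interval adj x y m' -> in_interval adj y z m' ->
                        in_interval adj x z m' -> m' = m])].

Definition locally_finite (V : Type) (adj : V -> V -> Prop) : Prop :=
  forall x, exists s : list V, forall y, adj x y -> List.In y s.

Definition graph_aut (V : Type) (adj : V -> V -> Prop) (g : V -> V) : Prop :=
  bijective g /\ forall x y, adj x y <-> adj (g x) (g y).

Definition is_cube (V : Type) (adj : V -> V -> Prop) (k : nat)
    (f : {ffun 'I_k -> bool} -> V) : Prop :=
  injective f /\
  forall a b, adj (f a) (f b) <-> #|[pred i | a i != b i]| = 1.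

Definition cube_stable (V : Type) (g : V -> V) (k : nat)
    (f : {ffun 'I_k -> bool} -> V) : Prop :=
  forall a, exists b, g (f a) = f b.

(* Gamma : the deck group pi_1 X, acting (faithfully) on the universal
   cover by cubical automorphisms, freely (no nontrivial element stabilises
   a cube, i.e. fixes a point) and cocompactly (X compact). *)
Definition deck_group (V : Type) (adj : V -> V -> Prop)
    (Gamma : (V -> V) -> Prop) : Prop :=
  [/\ (forall g, Gamma g -> graph_aut adj g) /\ Gamma id,
      (forall g h, Gamma g -> Gamma h -> Gamma (g \o h)),
      (forall g, Gamma g -> exists h, [/\ Gamma h, cancel g h & cancel h g]),
      (forall g, Gamma g -> (exists x, g x <> x) ->
         forall k (f : {ffun 'I_k -> bool} -> V), is_cube adj f -> ~ cube_stable g f)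
    & (exists s : list V, forall x, exists g v,
         [/\ Gamma g, List.In v s & g v = x])].

(* convex subcomplex = geodesically convex vertex set *)
Definition convex_sub (V : Type) (adj : V -> V -> Prop) (Y : V -> Prop) :=
  forall x y m, Y x -> Y y -> in_interval adj x y m -> Y m.

(* (Y, phi) is a quasiline: Y convex, phi in pi_1 X nontrivial,
   <phi> acts on Y, cocompactly (finitely many <phi>-orbits of vertices) *)
Definition quasiline (V : Type) (adj : V -> V -> Prop)
    (Gamma : (V -> V) -> Prop) (Y : V -> Prop) (phi : V -> V) : Prop :=
  [/\ convex_sub adj Y, Gamma phi, (exists x, phi x <> x),
      (forall y, Y y -> Y (phi y)) /\
      (forall y, Y y -> exists y', Y y' /\ phi y' = y)
    & (exists s : list V, (forall v, List.In v s -> Y v) /\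
         forall y, Y y -> exists v n,
           List.In v s /\ (iter n phi v = y \/ iter n phi y = v))].

Definition edge (V : Type) (adj : V -> V -> Prop) (Y : V -> Prop) (e : V * V) :=
  [/\ Y e.1, Y e.2 & adj e.1 e.2].

Definition swap (V : Type) (e : V * V) : V * V := (e.2, e.1).
Definition orient (V : Type) (b : bool) (e : V * V) : V * V :=
  if b then e else swap e.
Definition map_edge (V : Type) (g : V -> V) (e : V * V) : V * V :=
  (g e.1, g e.2).

(* elementary parallelism: reversal, or opposite sides of a square of Y *)
Definition hstep (V : Type) (adj : V -> V -> Prop) (Y : V -> Prop)
    (e e' : V * V) : Prop :=
  [/\ edge adj Y e, edge adj Y e' &
      (e' = swap e \/
       [/\ adj e.1 e'.1, adj e.2 e'.2, e.1 <> e'.2 & e.2 <> e'.1])].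

(* e and e' are dual to the same hyperplane of Y *)
Definition same_hyp (V : Type) (adj : V -> V -> Prop) (Y : V -> Prop)
    (e e' : V * V) : Prop :=
  clos_refl_sym_trans _ (hstep adj Y) e e'.

Definition hs_step (V : Type) (adj : V -> V -> Prop) (Y : V -> Prop)
    (e : V * V) (a b : V) : Prop :=
  [/\ Y a, Y b, adj a b & ~ same_hyp adj Y e (a, b)].

(* the halfspace of the hyperplane of e containing e.1: the component of
   Y minus the hyperplane containing e.1 (vertices of it) *)
Definition halfspace (V : Type) (adj : V -> V -> Prop) (Y : V -> Prop)
    (e : V * V) (x : V) : Prop :=
  Y x /\ clos_refl_trans _ (hs_step adj Y e) e.1 x.

Definition carrier (V : Type) (adj : V -> V -> Prop) (Y : V -> Prop)
    (e : V * V) (x : V) : Prop :=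
  exists e', [/\ edge adj Y e', same_hyp adj Y e e' & (x = e'.1 \/ x = e'.2)].

(* the halfspace containing e.1 is deep *)
Definition deep (V : Type) (adj : V -> V -> Prop) (Y : V -> Prop)
    (e : V * V) : Prop :=
  forall n, exists x, halfspace adj Y e x /\
    forall c, carrier adj Y e c -> ~ within adj Y n x c.

Definition essential (V : Type) (adj : V -> V -> Prop) (Y : V -> Prop) e :=
  deep adj Y e /\ deep adj Y (swap e).
Definition trivial_hyp (V : Type) (adj : V -> V -> Prop) (Y : V -> Prop) e :=
  ~ deep adj Y e /\ ~ deep adj Y (swap e).
Definition half_essential (V : Type) (adj : V -> V -> Prop) (Y : V -> Prop) e :=
  (deep adj Y e /\ ~ deep adj Y (swap e)) \/
  (~ deep adj Y e /\ deep adj Y (swap e)).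

Definition diam_le (V : Type) (adj : V -> V -> Prop) (Y : V -> Prop)
    (S : V -> Prop) (D : nat) : Prop :=
  forall x y, S x -> S y -> within adj Y D x y.

Definition crosses (V : Type) (adj : V -> V -> Prop) (Y : V -> Prop)
    (e1 e2 : V * V) : Prop :=
  forall b1 b2 : bool, exists x,
    halfspace adj Y (orient b1 e1) x /\ halfspace adj Y (orient b2 e2) x.

(* The 1-skeleton of a CAT(0) cube complex is a median graph; there the two
   halfspaces of the hyperplane dual to an edge (u, v) of Y are the vertices closer
   to u and those closer to v, and crossing hyperplanes have meeting carriers.
   Since <phi> acts cocompactly, every edge of Y is a translate of one of finitely
   many edges, so a translation-invariant bound that holds for each hyperplane
   holds uniformly.  A hyperplane is trivial exactly when some positive power of
   phi stabilises it: then its carrier is coarsely dense in Y; otherwise its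
   translates are distinct, only finitely many of them meet a fundamental domain,
   so its carrier is bounded, and if it were trivial Y would be bounded, against
   the infinite free orbits of phi.  This gives (1) and (4); (2) follows from (1)
   and a uniform bound on shallowness.  For (3), phi^d moves every vertex of an
   essential hyperplane H farther than 3D, while a common carrier point of H and
   phi^d H, or a nontrivial hyperplane crossing both, would join them within 3D. *)

From Stdlib Require Import Relation_Operators Operators_Properties Lia.
From Stdlib Require List.
From mathcomp Require Import all_boot zify boolp.
Set Implicit Arguments. Unset Strict Implicit. Unset Printing Implicit Defensive.

Section FiniteLists.
Variable T : Type.

Lemma list_eventually (L : list T) (Q : T -> nat -> Prop) :
  (forall x, exists B, forall B', B <= B' -> Q x B') ->
  exists B, forall B', B <= B' -> forall x, List.In x L -> Q x B'.
Proof.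
move=> HQ; elim: L => [|a L [B HB]]; first by exists 0.
have [Ba Ha] := HQ a; exists (maxn B Ba) => B' HB' x [<-|Hx].
  by apply: Ha; apply: leq_trans HB'; apply: leq_maxr.
by apply: HB => //; apply: leq_trans HB'; apply: leq_maxl.
Qed.

Lemma list_max_bound (L : list T) (M : nat) (F : nat -> T -> nat) :
  exists B, forall n x, n < M -> List.In x L -> F n x <= B.
Proof.
have [B HB] : exists B, forall B', B <= B' -> forall x, List.In x L ->
    forall n, n < M -> F n x <= B'.
  apply: list_eventually => x; exists (\max_(i < M) F i x) => B' HB' n Hn.
  by apply: leq_trans HB'; exact: (@leq_bigmax _ (fun i : 'I_M => F i x) (Ordinal Hn)).
by exists B => n x Hn Hx; apply: HB.
Qed.

Lemma pigeonhole_bound (L : list T) (P : nat -> Prop) (R : nat -> T -> Prop) :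
  (forall n, P n -> exists2 y, List.In y L & R n y) ->
  (forall n m y, n < m -> P n -> P m -> R n y -> R m y -> False) ->
  exists M, forall n, P n -> n < M.
Proof.
elim: L P => [|a L IH] P label uniq; first by exists 0 => n /label [].
case: (pselect (exists2 n0, P n0 & R n0 a)) => [[n0 Pn0 Rn0]|Hno]; last first.
  apply: IH uniq => n Pn; have [y [Ey|Iy] Ry] := label n Pn; last by exists y.
  by case: Hno; exists n; rewrite // Ey.
have [M HM] : exists M, forall n, P n /\ n0 < n -> n < M.
  apply: IH => [n [Pn Hn]|n m y Hnm [Pn _] [Pm _]]; last exact: uniq.
  have [y [Ey|Iy] Ry] := label n Pn; last by exists y.
  by case: (uniq n0 n a) => //; rewrite Ey.
exists (maxn M n0.+1) => n Pn; case: (ltnP n0 n) => Hn.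
  by have := HM n (conj Pn Hn); lia.
by lia.
Qed.

End FiniteLists.

Section Paths.
Variables (V : Type) (adj : V -> V -> Prop) (Z : V -> Prop).

Lemma within_leq n m x y : n <= m -> within adj Z n x y -> within adj Z m x y.
Proof.
elim: n m x => [|n IH] [|m] x //= Hnm; first by move=> ->; left.
case=> [->|[z [Zz [Hxz Hzy]]]]; first by left.
by right; exists z; do 2!split => //; apply: IH.
Qed.

Lemma within_cat n m x y z :
  within adj Z n x y -> within adj Z m y z -> within adj Z (n + m) x z.
Proof.
elim: n x => [|n IH] x; first by move=> /= ->.
case=> [-> Hyz|[w [Zw [Hxw Hwy]]] Hyz]; first exact: within_leq (leq_addl n.+1 m) Hyz.
by rewrite addSn; right; exists w; do 2!split => //; apply: IH.
Qed.

Lemma within_rcons n x y z :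
  within adj Z n x y -> Z z -> adj y z -> within adj Z n.+1 x z.
Proof.
move=> Hxy Zz Hyz; rewrite -addn1; apply: within_cat Hxy _.
by right; exists z.
Qed.

Lemma within_sub (Z' : V -> Prop) n x y :
  (forall v, Z v -> Z' v) -> within adj Z n x y -> within adj Z' n x y.
Proof.
move=> ZZ'; elim: n x => [|n IH] x //=.
case=> [->|[w [Zw [Hxw Hwy]]]]; first by left.
by right; exists w; split; [apply: ZZ' | split => //; apply: IH].
Qed.

Lemma within_rev n x y : (forall a b, adj a b -> adj b a) -> Z x ->
  within adj Z n x y -> within adj Z n y x.
Proof.
move=> adjC; elim: n x => [|n IH] x Zx /=; first by move=> ->.
case=> [->|[w [Zw [Hxw Hwy]]]]; first by left.
by apply: within_rcons (IH _ Zw Hwy) Zx _; apply: adjC.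
Qed.

End Paths.

Section MedianGraph.
Variables (V : Type) (adj : V -> V -> Prop).
Hypothesis median : median_graph adj.

Lemma adj_sym x y : adj x y -> adj y x.
Proof. by case: median => + _ _ _; apply. Qed.

Lemma adj_irrefl x : ~ adj x x.
Proof. by case: median => _ + _ _; apply. Qed.

Lemma path_exists x y : exists n, `[< within adj (@allV V) n x y >].
Proof. by case: median => _ _ /(_ x y) [n Hn] _; exists n; apply/asboolP. Qed.

Definition dist x y := ex_minn (path_exists x y).

Lemma within_dist x y : within adj (@allV V) (dist x y) x y.
Proof. by rewrite /dist; case: ex_minnP => n /asboolP. Qed.

Lemma dist_minimal n x y : within adj (@allV V) n x y -> dist x y <= n.
Proof. by rewrite /dist; case: ex_minnP => m _ + H; apply; apply/asboolP. Qed.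

Lemma is_distE x y n : is_dist adj x y n <-> n = dist x y.
Proof.
split => [[Hn Hmin]|->]; last by split=> [|m]; [apply: within_dist | apply: dist_minimal].
by apply/eqP; rewrite eqn_leq dist_minimal // andbT; apply/Hmin/within_dist.
Qed.

Lemma in_intervalE x y m : in_interval adj x y m <-> dist x m + dist m y = dist x y.
Proof.
split => [[a [b [c [/is_distE -> /is_distE -> /is_distE ->]]]] //|H].
by exists (dist x m), (dist m y), (dist x y); split => //; apply/is_distE.
Qed.

Lemma dist0 x : dist x x = 0.
Proof. by apply/eqP; rewrite -leqn0; apply: dist_minimal. Qed.

Lemma dist_eq0 x y : dist x y = 0 -> x = y.
Proof. by move=> H; have := within_dist x y; rewrite H. Qed.

Lemma distC x y : dist x y = dist y x.
Proof.
by apply/eqP; rewrite eqn_leq !dist_minimal //;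
  apply: within_rev (within_dist _ _) => //; apply: adj_sym.
Qed.

Lemma dist_triangle x y z : dist x z <= dist x y + dist y z.
Proof. by apply: dist_minimal; apply: within_cat; apply: within_dist. Qed.

Lemma dist_adj x y : adj x y -> dist x y = 1.
Proof.
move=> Hxy; apply/eqP; rewrite eqn_leq dist_minimal /=; last by right; exists y; do !split.
by rewrite lt0n; apply/negP => /eqP /dist_eq0 E; apply: (@adj_irrefl x); rewrite {2}E.
Qed.

Lemma dist_stepS x y k : dist x y = k.+1 -> exists2 z, adj x z & dist z y = k.
Proof.
move=> Dxy; have := within_dist x y; rewrite Dxy /= => -[E|[z [_ [Hxz Hzy]]]].
  by move: Dxy; rewrite E dist0.
exists z => //; apply/eqP; rewrite eqn_leq dist_minimal //.
by have := dist_triangle x z y; rewrite Dxy (dist_adj Hxz) add1n ltnS.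
Qed.

Lemma dist1_adj x y : dist x y = 1 -> adj x y.
Proof. by case/dist_stepS => z Hxz /dist_eq0 <-. Qed.

Definition is_median x y z m :=
  [/\ dist x m + dist m y = dist x y, dist y m + dist m z = dist y z
    & dist x m + dist m z = dist x z].

Lemma median_exists x y z : exists m, is_median x y z m.
Proof.
case: median => _ _ _ /(_ x y z) [m [H1 H2 H3 _]].
by exists m; split; apply/in_intervalE.
Qed.

Lemma median_uniq x y z m m' : is_median x y z m -> is_median x y z m' -> m = m'.
Proof.
case: median => _ _ _ /(_ x y z) [m0 [_ _ _ uniq]] [H1 H2 H3] [H1' H2' H3'].
by rewrite (uniq m) 1?(uniq m') //; apply/in_intervalE.
Qed.

(* Median graphs are bipartite: the median of x, u, v is u or v. *)
Lemma dist_adj_cases x u v : adj u v ->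
  dist x v = (dist x u).+1 \/ dist x u = (dist x v).+1.
Proof.
move=> Huv; have [m [Dxu Duv Dxv]] := median_exists x u v.
rewrite (dist_adj Huv) in Duv.
have [/dist_eq0 Eum|/dist_eq0 Emv] : dist u m = 0 \/ dist m v = 0 by lia.
  by move: Dxv Dxu; rewrite -Eum dist0 (dist_adj Huv); lia.
by move: Dxv Dxu; rewrite Emv dist0 (dist_adj (adj_sym Huv)); lia.
Qed.

Lemma dist_adj_common a x y : adj a x -> adj a y -> x <> y -> dist x y = 2.
Proof.
move=> Hax Hay xy; have := dist_adj_cases x Hay; rewrite (distC x a) (dist_adj Hax).
by case: (posnP (dist x y)) => [/dist_eq0 //|]; lia.
Qed.

Lemma quadrangle x y z : dist x y = 2 -> dist x z = dist y z ->
  exists m, [/\ adj x m, adj y m & (dist m z).+1 = dist x z].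
Proof.
move=> Dxy Dz; have [m [Dm1 Dm2 Dm3]] := median_exists x y z.
rewrite (distC y m) in Dm2.
have Dxm : dist x m = 1 by lia.
have Dym : dist y m = 1 by rewrite distC; lia.
by exists m; split; [apply: dist1_adj | apply: dist1_adj | lia].
Qed.

Variable Y : V -> Prop.
Hypothesis Yconvex : convex_sub adj Y.

Lemma same_hyp_sym e f : same_hyp adj Y e f -> same_hyp adj Y f e.
Proof. exact: rst_sym. Qed.

Lemma same_hyp_trans e f g :
  same_hyp adj Y e f -> same_hyp adj Y f g -> same_hyp adj Y e g.
Proof. exact: rst_trans. Qed.

Lemma convex_step x y z : Y x -> Y y -> adj x z -> (dist z y).+1 = dist x y -> Y z.
Proof.
move=> Yx Yy Hxz Dz; apply: (Yconvex Yx Yy); apply/in_intervalE.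
by rewrite (dist_adj Hxz) add1n.
Qed.

Lemma within_of_dist n x y : Y x -> Y y -> dist x y <= n -> within adj Y n x y.
Proof.
move=> Yx Yy Hn; apply: within_leq Hn _; move Dk: (dist x y) => k.
elim: k x Yx Dk => [|k IH] x Yx Dk; first exact: dist_eq0.
have [z Hxz Dz] := dist_stepS Dk.
have Yz : Y z by apply: convex_step Yx Yy Hxz _; rewrite Dz Dk.
by right; exists z; do 2!split => //; apply: IH.
Qed.

Lemma diam_le_of_dist (S : V -> Prop) n : (forall x, S x -> Y x) ->
  (forall x y, S x -> S y -> dist x y <= n) -> diam_le adj Y S n.
Proof. by move=> SY Sn x y Sx Sy; apply: within_of_dist; [apply: SY | apply: SY | apply: Sn]. Qed.

Lemma dist_of_within n x y : within adj Y n x y -> dist x y <= n.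
Proof. by move=> H; apply: dist_minimal; apply: within_sub H. Qed.

Definition cuts (e f : V * V) :=
  dist f.1 e.1 < dist f.1 e.2 /\ dist f.2 e.2 < dist f.2 e.1.

Lemma cuts_dist u v a b : adj u v -> adj a b -> cuts (u, v) (a, b) ->
  [/\ dist a v = (dist a u).+1, dist b v = dist a u & dist b u = (dist a u).+1].
Proof.
move=> Huv Hab [/= Hau Hbv].
have := dist_adj_cases a Huv; have := dist_adj_cases b Huv.
have := dist_triangle a b v; have := dist_triangle b a u.
rewrite (dist_adj Hab) (dist_adj (adj_sym Hab)) => *; split; lia.
Qed.

(* a has at most one neighbour across the hyperplane of (u, v): otherwise the
   quadrangle over a' and b would give a second median of a', b and u. *)
Lemma cuts_neighbour u v a b a' : adj u v -> adj a b -> adj a a' -> a' <> b ->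
  cuts (u, v) (a, b) -> dist a' u < dist a' v.
Proof.
move=> Huv Hab Haa' a'b Hcut; have [Dav Dbv Dbu] := cuts_dist Huv Hab Hcut.
rewrite ltnNge; apply/negP => Hge.
have [Da'v Da'u] : dist a' v = dist a u /\ dist a' u = (dist a u).+1.
  have := dist_adj_cases a' Huv; have := dist_adj_cases u Haa'; have := dist_adj_cases v Haa'.
  rewrite !(distC u) !(distC v); lia.
have [m [Ha'm Hbm Dmv]] := quadrangle (dist_adj_common Haa' Hab a'b) (etrans Da'v (esym Dbv)).
have Dmu : dist m u = dist a u.
  have := dist_triangle m v u; have := dist_triangle b m u.
  rewrite (distC v u) (dist_adj Huv) (dist_adj Hbm); lia.
suff Eam : a = m by move: Dmv; rewrite -Eam Dav Da'v; lia.
apply: (@median_uniq a' b u); split;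
  rewrite ?(dist_adj_common Haa' Hab a'b) ?(distC a' a) ?(dist_adj Haa') ?(distC b a)
    ?(dist_adj Hab) ?(dist_adj Ha'm) ?(distC m b) ?(dist_adj Hbm) //; lia.
Qed.

(* Induction on d(a, u): the quadrangle over b and a neighbour a' of a closer to u
   yields a square a a' m b whose edge (a', m) is again cut. *)
Lemma cuts_same_hyp u v a b : edge adj Y (u, v) -> edge adj Y (a, b) ->
  cuts (u, v) (a, b) -> same_hyp adj Y (u, v) (a, b).
Proof.
case=> /= Yu Yv Huv; move Dk: (dist a u) => k.
elim: k a b Dk => [|k IH] a b Dk [/= Ya Yb Hab] Hcut;
  have [Dav Dbv Dbu] := cuts_dist Huv Hab Hcut; rewrite Dk in Dav Dbv Dbu.
  by rewrite (dist_eq0 Dk) (dist_eq0 Dbv); apply: rst_refl.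
have [a' Haa' Da'u] := dist_stepS Dk.
have Ya' : Y a' by apply: convex_step Ya Yu Haa' _; rewrite Da'u Dk.
have Da'v : dist a' v = k.+1.
  have := dist_triangle a' u v; have := dist_triangle a a' v.
  rewrite Da'u Dav (dist_adj Huv) (dist_adj Haa'); lia.
have a'b : a' <> b by move=> E; move: Da'u; rewrite E Dbu; lia.
have [m [Ha'm Hbm Dmv]] :=
  quadrangle (dist_adj_common Haa' Hab a'b) (etrans Da'v (esym Dbv)).
have Dmu : dist m u = k.+1.
  have := dist_triangle m v u; have := dist_triangle b m u.
  rewrite (distC v u) (dist_adj Huv) (dist_adj Hbm) Dbu; lia.
have Ym : Y m by apply: convex_step Yb Yv Hbm _; rewrite Dbv -Da'v.
apply: same_hyp_trans (IH a' m Da'u _ _) (rst_step _ _ _ _ _).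
- by split.
- by rewrite /cuts /= Da'u Da'v Dmu; split; lia.
split; [by split | by split | right; split => /=].
- exact: adj_sym.
- exact: adj_sym.
- exact: a'b.
- by move=> E; move: Dmv; rewrite E Dav Da'v; lia.
Qed.

Definition cuts_either e f := cuts e f \/ cuts e (swap f).

Lemma hstep_sym f g : hstep adj Y f g -> hstep adj Y g f.
Proof.
case: f g => [a b] [a' b'] [Ef Eg /= [E|[Haa' Hbb' ab' ba']]].
  by case: E Eg => -> -> Eg; split => //; left.
by split => //; right; split => /=; [apply: adj_sym | apply: adj_sym | apply: nesym ..].
Qed.

Lemma hstep_cuts_either u v f g : adj u v -> hstep adj Y f g ->
  cuts_either (u, v) f -> cuts_either (u, v) g.
Proof.
case: f g => [a b] [a' b'] Huv [[_ _ Hab] _ /= [[-> ->]|[Haa' Hbb' ab' ba']]].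
  by rewrite /cuts_either /swap /=; case; [right|left].
have Hvu := adj_sym Huv; have Hba := adj_sym Hab.
case=> -[/= C1 C2]; [left|right]; split => /=.
- exact: cuts_neighbour Huv Hab Haa' (nesym ba') (conj C1 C2).
- exact: cuts_neighbour Hvu Hba Hbb' (nesym ab') (conj C2 C1).
- exact: cuts_neighbour Huv Hba Hbb' (nesym ab') (conj C1 C2).
- exact: cuts_neighbour Hvu Hab Haa' (nesym ba') (conj C2 C1).
Qed.

Lemma same_hyp_cuts e f : edge adj Y e -> same_hyp adj Y e f -> cuts_either e f.
Proof.
case: e => u v [_ _ Huv] Huvf; elim: (clos_rst_rstn1 _ _ _ _ Huvf) => [|g g' Hgg' _ IH].
  by left; rewrite /cuts /= !dist0 (dist_adj Huv) (dist_adj (adj_sym Huv)).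
by case: Hgg' => [|/hstep_sym] /(hstep_cuts_either Huv); apply.
Qed.

Lemma halfspaceE e x : edge adj Y e ->
  halfspace adj Y e x <-> Y x /\ dist x e.1 < dist x e.2.
Proof.
case: e => u v He; have [/= Yu Yv Huv] := He; split.
  case=> Yx Hux; split => //=.
  elim: (clos_rt_rtn1 _ _ _ _ Hux) => [|y z [Yy Yz Hyz Hns] _ IH].
    by rewrite dist0 (dist_adj Huv).
  rewrite ltnNge; apply/negP => Hz; apply: Hns; apply: cuts_same_hyp => //.
  by rewrite /cuts /=; have := dist_adj_cases z Huv; lia.
case=> /= Yx Hx; split => //=; move Dk: (dist x u) => k.
elim: k x Yx Dk Hx => [|k IH] x Yx Dk Hx; first by rewrite (dist_eq0 Dk); apply: rt_refl.
have [z Hxz Dz] := dist_stepS Dk.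
have Yz : Y z by apply: convex_step Yx Yu Hxz _; rewrite Dz Dk.
have Hz : dist z u < dist z v.
  by have := dist_triangle x z v; rewrite (dist_adj Hxz) Dz; lia.
apply: rt_trans (IH z Yz Dz Hz) (rt_step _ _ _ _ _).
split => //; first exact: adj_sym.
by move/(same_hyp_cuts He) => [[/= C1 C2]|[/= C1 C2]]; lia.
Qed.

Lemma edge_swap e : edge adj Y e -> edge adj Y (swap e).
Proof. by case=> Y1 Y2 H12; split => //; apply: adj_sym. Qed.

Lemma edge_orient b e : edge adj Y e -> edge adj Y (orient b e).
Proof. by case: b => //; apply: edge_swap. Qed.

Lemma same_hyp_swap e : edge adj Y e -> same_hyp adj Y e (swap e).
Proof. by move=> He; apply: rst_step; split => //; [apply: edge_swap | left]. Qed.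

Lemma carrier_swap e x : edge adj Y e -> carrier adj Y (swap e) x <-> carrier adj Y e x.
Proof.
move=> He; have Hee := same_hyp_swap He.
by split; case=> e' [E1 E2 E3]; exists e'; split => //;
  [apply: same_hyp_trans Hee E2 | apply: same_hyp_trans (same_hyp_sym Hee) E2].
Qed.

Lemma carrier_orient b e x : edge adj Y e -> carrier adj Y (orient b e) x <-> carrier adj Y e x.
Proof. by case: b => //; apply: carrier_swap. Qed.

Lemma carrier_Y e x : carrier adj Y e x -> Y x.
Proof. by case=> e' [[Y1 Y2 _] _ [->|->]]. Qed.

Lemma carrier_fst e : edge adj Y e -> carrier adj Y e e.1.
Proof. by move=> He; exists e; split => //; [apply: rst_refl | left]. Qed.

Lemma halfspace_cover e x : edge adj Y e -> Y x ->
  halfspace adj Y e x \/ halfspace adj Y (swap e) x.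
Proof.
move=> He Yx; rewrite (halfspaceE _ He) (halfspaceE _ (edge_swap He)) /=.
by case: He => _ _ /(dist_adj_cases x) [D|D]; [left|right]; split => //; lia.
Qed.

Lemma halfspace_disjoint e x : edge adj Y e ->
  halfspace adj Y e x -> halfspace adj Y (swap e) x -> False.
Proof.
by move=> He; rewrite (halfspaceE _ He) (halfspaceE _ (edge_swap He)) /= => -[_ ?] [_ ?]; lia.
Qed.

Lemma hs_step_sym e a b : hs_step adj Y e a b -> hs_step adj Y e b a.
Proof.
case=> Ya Yb Hab Hns; split => //; first exact: adj_sym.
move=> Hba; apply: Hns; apply: same_hyp_trans Hba (same_hyp_sym _).
by apply: (same_hyp_swap (e := (a, b))).
Qed.

Lemma halfspace_step e a b :
  hs_step adj Y e a b -> halfspace adj Y e a -> halfspace adj Y e b.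
Proof.
move=> Hab [Ya Ha]; split; first by case: Hab.
by apply: rt_trans Ha (rt_step _ _ _ _ Hab).
Qed.

Lemma hs_step_off_carrier e a b : Y a -> Y b -> adj a b -> ~ carrier adj Y e a ->
  hs_step adj Y e a b.
Proof. by move=> Ya Yb Hab Ca; split => // Hs; apply: Ca; exists (a, b); split => //; left. Qed.

Lemma carrier_in_halfspace e f : edge adj Y e ->
  (forall p, carrier adj Y e p -> ~ carrier adj Y f p) ->
  halfspace adj Y f e.1 -> forall z, carrier adj Y e z -> halfspace adj Y f z.
Proof.
move=> He disj Hfe z [g [_ Seg Hz]].
have step a b : carrier adj Y e a -> Y b -> adj a b ->
    halfspace adj Y f a -> halfspace adj Y f b.
  move=> Ca Yb Hab; apply: halfspace_step.
  exact: hs_step_off_carrier (carrier_Y Ca) Yb Hab (disj a Ca).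
suff [_ H1 H2] : [/\ same_hyp adj Y e g, halfspace adj Y f g.1 & halfspace adj Y f g.2].
  by case: Hz => ->.
elim: (clos_rst_rstn1 _ _ _ _ Seg) => [|g1 g2 Hg _ [S1 H1 H2]].
  have [_ Y2 H12] := He.
  by split => //; [apply: rst_refl | apply: step (carrier_fst He) Y2 H12 Hfe].
have {}Hg : hstep adj Y g1 g2 by case: Hg => // /hstep_sym.
have S2 : same_hyp adj Y e g2 by apply: same_hyp_trans S1 (rst_step _ _ _ _ Hg).
have [Eg1 [Y1' Y2' _] [E|[H11 H22 _ _]]] := Hg; first by split => //; rewrite E.
have C1 : carrier adj Y e g1.1 by exists g1; split => //; left.
have C2 : carrier adj Y e g1.2 by exists g1; split => //; right.
by split => //; [apply: step C1 Y1' H11 H1 | apply: step C2 Y2' H22 H2].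
Qed.

Lemma halfspace_off_carrier e f x : edge adj Y f ->
  (forall z, halfspace adj Y f z -> ~ carrier adj Y e z) ->
  halfspace adj Y f x -> halfspace adj Y e x -> halfspace adj Y e f.1.
Proof.
move=> Hf disj [_ Hfx] Hex; have [Yf1 _ _] := Hf.
suff: forall a, clos_refl_trans_1n _ (hs_step adj Y f) a x ->
    halfspace adj Y f a -> halfspace adj Y e x -> halfspace adj Y e a.
  by apply=> //; [apply: clos_rt_rt1n | split => //; apply: rt_refl].
move=> a; elim=> // {}a b x' Hab _ IH Hfa Hex'.
apply: halfspace_step (IH (halfspace_step Hab Hfa) Hex'); apply: hs_step_sym.
by case: Hab => Ya Yb Hab _; apply: hs_step_off_carrier => //; apply: disj.
Qed.

(* Otherwise the carrier of e lies in one halfspace of f, and the other halfspace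
   of f, connected and disjoint from that carrier, lies in one halfspace of e. *)
Lemma cross_meet e f : edge adj Y e -> edge adj Y f -> crosses adj Y e f ->
  exists p, carrier adj Y e p /\ carrier adj Y f p.
Proof.
move=> He Hf Hc; apply: contrapT => Hdisj.
have disj p : carrier adj Y e p -> ~ carrier adj Y f p by move=> Cp Cf; apply: Hdisj; exists p.
have [b Hb] : exists b, forall z, halfspace adj Y (orient b f) z -> ~ carrier adj Y e z.
  have [Y1 _ _] := He; case: (halfspace_cover Hf Y1) => Hfe.
    exists false => z Hz Cz; apply: (halfspace_disjoint Hf _ Hz).
    exact: carrier_in_halfspace He disj Hfe _ Cz.
  exists true => z Hz Cz; apply: (halfspace_disjoint Hf Hz).
  apply: (carrier_in_halfspace He _ Hfe Cz) => p Cp.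
  by rewrite carrier_swap //; apply: disj.
have HF := edge_orient b Hf.
have [x [Hex HFx]] := Hc true b; have [y [Hey HFy]] := Hc false b.
apply: (halfspace_disjoint He (halfspace_off_carrier HF Hb HFx Hex)).
apply: halfspace_off_carrier HF _ HFy Hey => z /Hb.
by rewrite carrier_swap.
Qed.

Definition shallow e n :=
  forall x, halfspace adj Y e x -> exists2 c, carrier adj Y e c & dist x c <= n.

Lemma not_deepE e : ~ deep adj Y e <-> exists n, shallow e n.
Proof.
split=> [Hnd|[n Hn] Hd]; last first.
  have [x [Hx Hfar]] := Hd n; have [c Cc Dxc] := Hn x Hx.
  by apply: (Hfar c Cc); apply: within_of_dist Dxc; [case: Hx | apply: carrier_Y Cc].
apply: contrapT => Hns; apply: Hnd => n; apply: contrapT => Hnear; apply: Hns; exists n => x Hx.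
apply: contrapT => Hfar; apply: Hnear; exists x; split => // c Cc /dist_of_within Dxc.
by apply: Hfar; exists c.
Qed.

Lemma shallow_leq e n m : n <= m -> shallow e n -> shallow e m.
Proof. by move=> nm Hn x /Hn [c Cc Dxc]; exists c => //; apply: leq_trans nm. Qed.

Section Symmetry.
Variable phi : V -> V.

Record symmetry (g h : V -> V) : Prop := Symmetry {
  symK : cancel g h; symVK : cancel h g;
  sym_adj : forall x y, adj x y -> adj (g x) (g y);
  symV_adj : forall x y, adj x y -> adj (h x) (h y);
  sym_Y : forall x, Y x -> Y (g x); symV_Y : forall x, Y x -> Y (h x);
  sym_phi : forall x, g (phi x) = phi (g x); symV_phi : forall x, h (phi x) = phi (h x) }.

Lemma symmetry_inv g h : symmetry g h -> symmetry h g.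
Proof. by case=> *; split. Qed.

Lemma symmetry_iter g h n : symmetry g h -> symmetry (iter n g) (iter n h).
Proof.
case=> gK hK gA hA gY hY gphi hphi; elim: n => [|n [IK IVK IA IVA IY IVY Iphi IVphi]].
  by split.
split=> [x|x|x y Hxy|x y Hxy|x Yx|x Yx|x|x].
- by rewrite iterSr iterS gK IK.
- by rewrite iterSr iterS hK IVK.
- by rewrite !iterS; apply/gA/IA.
- by rewrite !iterS; apply/hA/IVA.
- by rewrite iterS; apply/gY/IY.
- by rewrite iterS; apply/hY/IVY.
- by rewrite !iterS Iphi gphi.
- by rewrite !iterS IVphi hphi.
Qed.

Lemma sym_iter_phi g h n x : symmetry g h -> g (iter n phi x) = iter n phi (g x).
Proof. by move=> Hg; elim: n => //= n IH; rewrite (sym_phi Hg) IH. Qed.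

Lemma map_edge_sym_iter g h n e : symmetry g h ->
  map_edge g (map_edge (iter n phi) e) = map_edge (iter n phi) (map_edge g e).
Proof. by move=> Hg; rewrite /map_edge /= !(sym_iter_phi _ _ Hg). Qed.

Lemma dist_map g h x y : symmetry g h -> dist (g x) (g y) = dist x y.
Proof.
have within_map f f' n a b : symmetry f f' ->
    within adj (@allV V) n a b -> within adj (@allV V) n (f a) (f b).
  move=> Hf; elim: n a => [|n IH] a /=; first by move=> ->.
  case=> [->|[c [_ [Hac Hcb]]]]; first by left.
  by right; exists (f c); do 2!split => //; [apply: (sym_adj Hf) | apply: IH].
move=> Hg; apply/eqP; rewrite eqn_leq; apply/andP; split; apply: dist_minimal.
  by apply: within_map Hg _; apply: within_dist.
rewrite -{2}[x](symK Hg) -{2}[y](symK Hg).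
by apply: within_map (symmetry_inv Hg) _; apply: within_dist.
Qed.

Lemma map_edgeK g h : symmetry g h -> cancel (map_edge g) (map_edge h).
Proof. by move=> Hg [a b]; rewrite /map_edge /= !(symK Hg). Qed.

Lemma edge_map g h e : symmetry g h -> edge adj Y e -> edge adj Y (map_edge g e).
Proof. by move=> Hg [Y1 Y2 H12]; split; [apply: (sym_Y Hg) .. | apply: (sym_adj Hg)]. Qed.

Lemma same_hyp_map g h e f : symmetry g h ->
  same_hyp adj Y (map_edge g e) (map_edge g f) <-> same_hyp adj Y e f.
Proof.
suff fwd g' h' e' f' : symmetry g' h' -> same_hyp adj Y e' f' ->
    same_hyp adj Y (map_edge g' e') (map_edge g' f').
  move=> Hg; split=> [/(fwd _ _ _ _ (symmetry_inv Hg))|]; last exact: fwd Hg.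
  by rewrite !(map_edgeK Hg).
move=> Hg; have inj := can_inj (symK Hg).
elim=> [a b [Ea Eb Hab]|a|a b _|a b c _ IHab _ IHbc].
- apply: rst_step; split; [exact: edge_map Hg Ea | exact: edge_map Hg Eb |].
  case: Hab => [->|[H1 H2 H3 H4]]; [by left | right].
  by split; [apply: (sym_adj Hg) | apply: (sym_adj Hg) | move/inj | move/inj].
- exact: rst_refl.
- exact: same_hyp_sym.
- exact: same_hyp_trans IHab IHbc.
Qed.

Lemma carrier_map g h e x : symmetry g h ->
  carrier adj Y (map_edge g e) (g x) <-> carrier adj Y e x.
Proof.
suff fwd g' h' e' x' : symmetry g' h' -> carrier adj Y e' x' ->
    carrier adj Y (map_edge g' e') (g' x').
  move=> Hg; split=> [/(fwd _ _ _ _ (symmetry_inv Hg))|]; last exact: fwd Hg.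
  by rewrite (map_edgeK Hg) (symK Hg).
move=> Hg [e'' [E S Hx]]; exists (map_edge g' e''); split.
- exact: edge_map Hg E.
- exact/(same_hyp_map _ _ Hg).
- by case: Hx => ->; [left | right].
Qed.

Lemma halfspace_map g h e x : symmetry g h ->
  halfspace adj Y (map_edge g e) (g x) <-> halfspace adj Y e x.
Proof.
suff fwd g' h' e' x' : symmetry g' h' -> halfspace adj Y e' x' ->
    halfspace adj Y (map_edge g' e') (g' x').
  move=> Hg; split=> [/(fwd _ _ _ _ (symmetry_inv Hg))|]; last exact: fwd Hg.
  by rewrite (map_edgeK Hg) (symK Hg).
move=> Hg [Yx Hx]; split; first exact: (sym_Y Hg).
change (map_edge g' e').1 with (g' e'.1).
elim: Hx {Yx} => [a b [Ya Yb Hab Hns]|a|a b c _ IHab _ IHbc].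
- apply: rt_step; split; [exact: (sym_Y Hg) | exact: (sym_Y Hg) | exact: (sym_adj Hg) |].
  by rewrite -[(g' a, g' b)]/(map_edge g' (a, b)) (same_hyp_map _ _ Hg).
- exact: rt_refl.
- exact: rt_trans IHab IHbc.
Qed.

Lemma shallow_map g h e n : symmetry g h -> shallow (map_edge g e) n <-> shallow e n.
Proof.
suff fwd g' h' e' : symmetry g' h' -> shallow e' n -> shallow (map_edge g' e') n.
  move=> Hg; split=> [/(fwd _ _ _ (symmetry_inv Hg))|]; last exact: fwd Hg.
  by rewrite (map_edgeK Hg).
move=> Hg He x; rewrite -[x](symVK Hg) (halfspace_map _ _ Hg) => /He [c Cc Dc].
by exists (g' c); [apply/(carrier_map _ _ Hg) | rewrite (dist_map _ _ Hg)].
Qed.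

End Symmetry.

Section LocallyFinite.
Hypothesis adj_finite : locally_finite adj.

Lemma edges_at_finite (s : list V) :
  exists Es, forall v w, List.In v s -> adj v w -> List.In (v, w) Es.
Proof.
elim: s => [|a s [Es HEs]]; first by exists nil.
have [la Ha] := adj_finite a.
exists (List.map (pair a) la ++ Es) => v w [<-|Hv] Hvw; apply: List.in_or_app.
  by left; apply: List.in_map; apply: Ha.
by right; apply: HEs.
Qed.

Lemma ball_finite x n : exists L, forall y, dist x y <= n -> List.In y L.
Proof.
elim: n => [|n [L HL]].
  by exists [:: x] => y; rewrite leqn0 => /eqP /dist_eq0 ->; left.
have [Es HEs] := edges_at_finite L.
exists (L ++ List.map snd Es) => y Hy; apply: List.in_or_app.
case: (ltnP n (dist x y)) => Hn; last by left; apply: HL.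
have [z Hyz Dz] : exists2 z, adj y z & dist z x = n by apply: dist_stepS; rewrite distC; lia.
right; apply: (List.in_map snd _ (z, y)); apply: HEs; last exact: adj_sym.
by apply: HL; rewrite distC Dz.
Qed.

End LocallyFinite.

Lemma map_edge_iterD (f : V -> V) n m e :
  map_edge (iter (n + m) f) e = map_edge (iter n f) (map_edge (iter m f) e).
Proof. by rewrite /map_edge !iterD. Qed.

Section Quasiline.
Variables (phi psi : V -> V) (s : list V) (Es : list (V * V)).
Hypothesis phi_sym : symmetry phi phi psi.
Hypothesis cocompact : forall y, Y y ->
  exists v n, List.In v s /\ (iter n phi v = y \/ iter n phi y = v).
Hypothesis Es_spec : forall v w, List.In v s -> adj v w -> List.In (v, w) Es.
Hypothesis free : forall k c, iter k phi c = c -> forall x, iter k phi x = x.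
Hypothesis adj_finite : locally_finite adj.

Local Notation symmetry := (symmetry phi).

Lemma iter_phi_sym n : symmetry (iter n phi) (iter n psi).
Proof. exact: symmetry_iter phi_sym. Qed.

Lemma iter_psi_sym n : symmetry (iter n psi) (iter n phi).
Proof. exact/symmetry_inv/iter_phi_sym. Qed.

Definition periodic e := exists2 k, 0 < k & same_hyp adj Y e (map_edge (iter k phi) e).

Lemma periodic_map g h e : symmetry g h -> periodic (map_edge g e) <-> periodic e.
Proof.
move=> Hg; split=> -[k k0 Hk]; exists k => //.
  by move: Hk; rewrite -(map_edge_sym_iter _ _ Hg) (same_hyp_map _ _ Hg).
by rewrite -(map_edge_sym_iter _ _ Hg) (same_hyp_map _ _ Hg).
Qed.

Lemma periodic_psi e k : 0 < k ->
  same_hyp adj Y e (map_edge (iter k psi) e) -> periodic e.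
Proof.
move=> k0 Hk; exists k => //; apply: same_hyp_sym.
by rewrite -(same_hyp_map _ _ (iter_phi_sym k)) (map_edgeK (iter_psi_sym k)) in Hk.
Qed.

Lemma same_hyp_iter_mul e k : same_hyp adj Y e (map_edge (iter k phi) e) ->
  forall q, same_hyp adj Y e (map_edge (iter (q * k) phi) e).
Proof.
move=> Hk; elim=> [|q IH]; first by case: e {Hk} => a b; apply: rst_refl.
rewrite mulSn map_edge_iterD; apply: same_hyp_trans Hk _.
exact/(same_hyp_map _ _ (iter_phi_sym k)).
Qed.

(* By freeness, a power of phi with a fixed point is the identity, which fixes
   every hyperplane. *)
Lemma aperiodic_orbit_inj e x n m : ~ periodic e -> iter n phi x = iter m phi x -> n = m.
Proof.
move=> aper.
have lt_contra a b : a < b -> iter a phi x = iter b phi x -> False.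
  move=> ab E; apply: aper; exists (b - a); first by rewrite subn_gt0.
  have Ex : iter (b - a) phi x = x.
    apply: (can_inj (symK (iter_phi_sym a))).
    by rewrite -iterD subnKC ?E //; apply: ltnW.
  by case: e => e1 e2; rewrite /map_edge /= !(free Ex); apply: rst_refl.
by case: (ltngtP n m) => // [nm|mn] E; [case: (lt_contra n m) | case: (lt_contra m n)].
Qed.

Lemma carrier_at_s e v : carrier adj Y e v -> List.In v s ->
  exists2 f, List.In f Es & same_hyp adj Y e f.
Proof.
case=> -[a b] [Eab Sab [/= ->|/= ->]] Hv.
  by exists (a, b) => //; apply: Es_spec => //; case: Eab.
exists (b, a); first by apply: Es_spec => //; case: Eab => _ _ /adj_sym.
exact: same_hyp_trans Sab (same_hyp_swap Eab).
Qed.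

(* Pigeonhole: the translates of the hyperplane are pairwise distinct, and only
   finitely many hyperplanes meet the finite set s. *)
Lemma returns_bounded g h e : symmetry g h ->
  (forall k, 0 < k -> ~ same_hyp adj Y e (map_edge (iter k g) e)) ->
  exists M, forall n z v, carrier adj Y e z -> List.In v s -> iter n g z = v -> n < M.
Proof.
move=> Hg aper.
have [M HM] : exists M, forall n,
    (exists z v, [/\ carrier adj Y e z, List.In v s & iter n g z = v]) -> n < M.
  apply: (pigeonhole_bound (L := Es) (R := fun n f => same_hyp adj Y (map_edge (iter n g) e) f)).
    move=> n [z [v [Cz Hv E]]]; apply: carrier_at_s Hv; rewrite -E.
    exact/(carrier_map _ _ (symmetry_iter n Hg)).
  move=> n m f nm _ _ Sn Sm; apply: (aper (m - n)); first by rewrite subn_gt0.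
  rewrite -(same_hyp_map _ _ (symmetry_iter n Hg)) -map_edge_iterD subnKC; last exact: ltnW.
  exact: same_hyp_trans Sn (same_hyp_sym Sm).
by exists M => n z v Cz Hv E; apply: HM; exists z, v.
Qed.

Lemma aperiodic_carrier_bounded e : ~ periodic e ->
  exists B, forall z, carrier adj Y e z -> dist e.1 z <= B.
Proof.
move=> aper.
have [M1 HM1] := returns_bounded phi_sym (fun k k0 Hk => aper (ex_intro2 _ _ k k0 Hk)).
have [M2 HM2] := returns_bounded (symmetry_inv phi_sym) (fun k k0 Hk => aper (periodic_psi k0 Hk)).
have [B HB] := list_max_bound s (maxn M1 M2)
  (fun n v => dist e.1 (iter n phi v) + dist e.1 (iter n psi v)).
exists B => z Cz; have [v [n [Hv [E|E]]]] := cocompact (carrier_Y Cz).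
  have Hn : n < M2 by apply: HM2 Cz Hv _; rewrite -E (symK (iter_phi_sym n)).
  by have := HB n v (leq_trans Hn (leq_maxr _ _)) Hv; rewrite E; lia.
have Hn : n < M1 by apply: HM1 Cz Hv E.
have := HB n v (leq_trans Hn (leq_maxl _ _)) Hv.
by rewrite -E (symK (iter_phi_sym n)); lia.
Qed.

(* Up to a power of phi^k, which preserves the hyperplane, every vertex of Y is
   phi^r v with r <= k and v in s. *)
Lemma periodic_coarsely_dense e : edge adj Y e -> periodic e ->
  exists B, forall y, Y y -> exists2 c, carrier adj Y e c & dist y c <= B.
Proof.
move=> He [k k0 Hk].
have carrier_translate g h : symmetry g h -> same_hyp adj Y e (map_edge g e) ->
    carrier adj Y e (g e.1).
  by move=> Hg Se; exists (map_edge g e); split => //; [apply: edge_map Hg He | left].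
have [B HB] := list_max_bound s k.+1 (fun r v => dist (iter r phi v) e.1).
exists B => y Yy; have [v [n [Hv [E|E]]]] := cocompact Yy.
  have Hq := iter_phi_sym (n %/ k * k).
  exists (iter (n %/ k * k) phi e.1); first exact: carrier_translate Hq (same_hyp_iter_mul Hk _).
  rewrite -E {1}(divn_eq n k) iterD (dist_map _ _ Hq).
  by apply: HB => //; apply: leq_trans (ltn_pmod n k0) _.
pose Q := (n %/ k).+1 * k.
have nQ : n <= Q by rewrite /Q mulSn; have := divn_eq n k; have := ltn_pmod n k0; lia.
have Hq := iter_psi_sym Q.
exists (iter Q psi e.1).
  apply: (carrier_translate _ _ Hq).
  rewrite -(same_hyp_map _ _ (iter_phi_sym Q)) (map_edgeK Hq).
  by apply/same_hyp_sym/same_hyp_iter_mul.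
rewrite -(dist_map _ _ (iter_phi_sym Q)) (symK Hq) -(subnK nQ) iterD E.
apply: HB => //; rewrite ltnS /Q mulSn; have := divn_eq n k; have := ltn_pmod n k0; lia.
Qed.

Lemma periodic_trivial e : edge adj Y e -> periodic e -> trivial_hyp adj Y e.
Proof.
move=> He /(periodic_coarsely_dense He) [B HB].
have near b : shallow (orient b e) B.
  by move=> x [Yx _]; have [c Cc Dc] := HB x Yx; exists c; rewrite ?carrier_orient.
by split; apply/not_deepE; exists B; [apply: (near true) | apply: (near false)].
Qed.

Lemma trivial_periodic e : edge adj Y e -> trivial_hyp adj Y e -> periodic e.
Proof.
move=> He [/not_deepE [n1 S1] /not_deepE [n2 S2]]; apply: contrapT => aper.
have [B HB] := aperiodic_carrier_bounded aper.
have bounded y : Y y -> dist e.1 y <= B + (n1 + n2).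
  move=> Yy; have [/S1 [c Cc Dc]|/S2 [c Cc Dc]] := halfspace_cover He Yy;
    [|rewrite carrier_swap // in Cc];
    by have := HB c Cc; have := dist_triangle e.1 c y; rewrite (distC c y); lia.
have [L HL] := ball_finite adj_finite e.1 (B + (n1 + n2)).
have [Y1 _ _] := He.
have [M HM] : exists M, forall n, True -> n < M.
  apply: (pigeonhole_bound (L := L) (R := fun j y => iter j phi e.1 = y)).
    move=> j _; exists (iter j phi e.1) => //; apply/HL/bounded.
    exact: (sym_Y (iter_phi_sym j)).
  by move=> n m y nm _ _ En Em; have := aperiodic_orbit_inj aper (etrans En (esym Em)); lia.
by have := HM M I; rewrite ltnn.
Qed.

Lemma trivial_hypE e : edge adj Y e -> trivial_hyp adj Y e <-> periodic e.
Proof. by move=> He; split; [apply: trivial_periodic | apply: periodic_trivial]. Qed.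

Lemma edge_rep e : edge adj Y e -> exists f n, List.In f Es /\
  (e = map_edge (iter n phi) f \/ e = map_edge (iter n psi) f).
Proof.
case: e => a b [/= Ya Yb Hab]; have [v [n [Hv [E|E]]]] := cocompact Ya.
  exists (v, iter n psi b), n; split; last by left; rewrite /map_edge /= E (symVK (iter_phi_sym n)).
  apply: Es_spec => //; rewrite -(symK (iter_phi_sym n) v) E.
  exact: (sym_adj (iter_psi_sym n)).
exists (v, iter n phi b), n; split; last by right; rewrite /map_edge /= -E !(symK (iter_phi_sym n)).
by apply: Es_spec => //; rewrite -E; apply: (sym_adj (iter_phi_sym n)).
Qed.

Lemma edge_rep_sym e : edge adj Y e ->
  exists f g h, [/\ List.In f Es, symmetry g h & e = map_edge g f].
Proof.
move=> /edge_rep [f [n [Hf [E|E]]]]; exists f.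
  by exists (iter n phi), (iter n psi); split => //; apply: iter_phi_sym.
by exists (iter n psi), (iter n phi); split => //; apply: iter_psi_sym.
Qed.

Lemma uniform_bound (P : V * V -> Prop) (Q : V * V -> nat -> Prop) :
  (forall g h e, symmetry g h -> P (map_edge g e) -> P e) ->
  (forall g h e n, symmetry g h -> Q e n -> Q (map_edge g e) n) ->
  (forall e n m, n <= m -> Q e n -> Q e m) ->
  (forall e, edge adj Y e -> P e -> exists n, Q e n) ->
  exists n, forall e, edge adj Y e -> P e -> Q e n.
Proof.
move=> P_inv Q_map Q_mono Q_ex.
have [n Hn] : exists n, forall n', n <= n' ->
    forall f, List.In f Es -> edge adj Y f -> P f -> Q f n'.
  apply: list_eventually => f.
  case: (pselect (edge adj Y f /\ P f)) => [[Ef Pf]|no]; last by exists 0 => ? _ Ef Pf; case: no.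
  by have [n Hn] := Q_ex f Ef Pf; exists n => m nm _ _; apply: Q_mono nm Hn.
exists n => e He Pe; have [f [g [h [Hf Hg Ee]]]] := edge_rep_sym He.
have Pf : P f by apply: P_inv Hg _; rewrite -Ee.
have Ef : edge adj Y f.
  by rewrite -(map_edgeK Hg f) -Ee; apply: edge_map (symmetry_inv Hg) He.
by rewrite Ee; apply: (Q_map _ _ _ _ Hg); apply: Hn.
Qed.

Lemma escape_time_bound R : exists d, forall e, edge adj Y e -> ~ periodic e ->
  forall d', d <= d' -> R < dist e.1 (iter d' phi e.1).
Proof.
apply: uniform_bound.
- by move=> g h e Hg aper /(periodic_map _ Hg).
- move=> g h e d Hg Hd d' dd'.
  by rewrite /= -(sym_iter_phi _ _ Hg) (dist_map _ _ Hg); apply: Hd.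
- by move=> e n m nm Hn d' md'; apply: Hn; apply: leq_trans md'.
move=> e _ aper; have [L HL] := ball_finite adj_finite e.1 R.
have [M HM] : exists M, forall n, dist e.1 (iter n phi e.1) <= R -> n < M.
  apply: (pigeonhole_bound (L := L) (R := fun n y => iter n phi e.1 = y)).
    by move=> n Hn; exists (iter n phi e.1) => //; apply: HL.
  by move=> n m y nm _ _ En Em; have := aperiodic_orbit_inj aper (etrans En (esym Em)); lia.
by exists M => d' Md'; rewrite ltnNge; apply/negP => /HM; lia.
Qed.

Lemma carrier_diam_bound : exists D, forall e, edge adj Y e -> ~ trivial_hyp adj Y e ->
  forall z w, carrier adj Y e z -> carrier adj Y e w -> dist z w <= D.
Proof.
have [D HD] : exists D, forall e, edge adj Y e -> ~ periodic e ->
    forall z w, carrier adj Y e z -> carrier adj Y e w -> dist z w <= D.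
  apply: uniform_bound.
  - by move=> g h e Hg aper /(periodic_map _ Hg).
  - move=> g h e D Hg HD z w.
    rewrite -[z](symVK Hg) -[w](symVK Hg) !(carrier_map _ _ Hg) (dist_map _ _ Hg).
    exact: HD.
  - by move=> e n m nm Hn z w Cz Cw; apply: leq_trans (Hn z w Cz Cw) nm.
  move=> e _ /aperiodic_carrier_bounded [B HB]; exists (B + B) => z w Cz Cw.
  by have := HB z Cz; have := HB w Cw; have := dist_triangle z e.1 w; rewrite (distC z e.1); lia.
by exists D => e He Hnt; apply: HD => //; rewrite -trivial_hypE.
Qed.

Section CarrierBound.
Variable D : nat.
Hypothesis carrier_diam : forall e, edge adj Y e -> ~ trivial_hyp adj Y e ->
  forall z w, carrier adj Y e z -> carrier adj Y e w -> dist z w <= D.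

Lemma shallow_halfspace_diam_bound : exists K, forall e, edge adj Y e ->
  half_essential adj Y e -> forall b, ~ deep adj Y (orient b e) ->
  forall x y, halfspace adj Y (orient b e) x -> halfspace adj Y (orient b e) y ->
  dist x y <= K.
Proof.
have [N HN] : exists N, forall e, edge adj Y e -> (exists n, shallow e n) -> shallow e N.
  apply: uniform_bound.
  - by move=> g h e Hg [n Hn]; exists n; apply/(shallow_map _ _ Hg).
  - by move=> g h e n Hg Hn; apply/(shallow_map _ _ Hg).
  - by move=> e n m; apply: shallow_leq.
  - by move=> e _ [n Hn]; exists n.
exists (N + D + N) => e He Hhe b /not_deepE Hb x y Hx Hy.
have Hnt : ~ trivial_hyp adj Y e by case: Hhe => -[? ?] [].
have [cx Cx Dx] := HN _ (edge_orient b He) Hb x Hx.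
have [cy Cy Dy] := HN _ (edge_orient b He) Hb y Hy.
rewrite carrier_orient // in Cx; rewrite carrier_orient // in Cy.
have := carrier_diam He Hnt Cx Cy; have := dist_triangle x cx y.
by have := dist_triangle cx cy y; rewrite (distC cy y); lia.
Qed.

Lemma essential_translate_bound : exists d, forall d', d <= d' -> forall e, edge adj Y e ->
  essential adj Y e ->
  [/\ ~ same_hyp adj Y e (map_edge (iter d' phi) e),
      ~ crosses adj Y e (map_edge (iter d' phi) e)
    & forall e', edge adj Y e' -> crosses adj Y e' e ->
        crosses adj Y e' (map_edge (iter d' phi) e) -> trivial_hyp adj Y e'].
Proof.
have [d Hd] := escape_time_bound (3 * D).
exists d => d' dd' e He [deep1 deep2].
have Hnt : ~ trivial_hyp adj Y e by case.
have far := Hd e He (fun per => Hnt (periodic_trivial He per)) d' dd'.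
have Hphi := iter_phi_sym d'.
set E' := map_edge (iter d' phi) e.
have HE' : edge adj Y E' := edge_map Hphi He.
have C1 := carrier_fst He.
have CE' q : carrier adj Y E' q -> dist q (iter d' phi e.1) <= D.
  rewrite -[q](symVK Hphi) (carrier_map _ _ Hphi) (dist_map _ _ Hphi) => Cq.
  exact: (carrier_diam He Hnt Cq C1).
split.
- move=> S; have CE : carrier adj Y e (iter d' phi e.1) by exists E'; split => //; left.
  by have := carrier_diam He Hnt C1 CE; lia.
- move=> /(cross_meet He HE') [p [Cp Cp']].
  have := carrier_diam He Hnt C1 Cp; have := CE' p Cp'.
  by have := dist_triangle e.1 p (iter d' phi e.1); lia.
move=> e' He' Hc1 Hc2; apply: contrapT => Hnt'.
have [p [Cp Cp']] := cross_meet He' He Hc1; have [q [Cq Cq']] := cross_meet He' HE' Hc2.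
have := carrier_diam He' Hnt' Cp Cq; have := carrier_diam He Hnt C1 Cp'; have := CE' q Cq'.
have := dist_triangle e.1 p (iter d' phi e.1); have := dist_triangle p q (iter d' phi e.1).
lia.
Qed.

End CarrierBound.

Lemma same_hyp_iter_mod f k n : 0 < k -> same_hyp adj Y f (map_edge (iter k phi) f) ->
  same_hyp adj Y (map_edge (iter n phi) f) (map_edge (iter (n %% k) phi) f).
Proof.
move=> k0 Hk; rewrite {1}(divn_eq n k) addnC map_edge_iterD.
by apply/same_hyp_sym/(same_hyp_map _ _ (iter_phi_sym _)); apply: same_hyp_iter_mul.
Qed.

Lemma same_hyp_iter_psi f k n : 0 < k -> same_hyp adj Y f (map_edge (iter k phi) f) ->
  same_hyp adj Y (map_edge (iter n psi) f) (map_edge (iter (n * k - n) phi) f).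
Proof.
move=> k0 Hk.
rewrite -[X in same_hyp _ _ _ X](map_edgeK (iter_phi_sym n)) -map_edge_iterD.
rewrite subnKC ?leq_pmulr //.
by apply/(same_hyp_map _ _ (iter_psi_sym n)); apply: same_hyp_iter_mul.
Qed.

Lemma trivial_hyps_finite : exists l : list (V * V), forall e, edge adj Y e ->
  trivial_hyp adj Y e -> exists e0, List.In e0 l /\ same_hyp adj Y e e0.
Proof.
have [B HB] : exists B, forall B', B <= B' -> forall f, List.In f Es -> periodic f ->
    exists2 k, 0 < k <= B' & same_hyp adj Y f (map_edge (iter k phi) f).
  apply: list_eventually => f; case: (pselect (periodic f)) => [[k k0 Hk]|np].
    by exists k => B' kB' _; exists k; rewrite ?k0.
  by exists 0 => B' _ /np.
exists (List.flat_map (fun f => List.map (fun r => map_edge (iter r phi) f) (List.seq 0 B)) Es).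
move=> e He /(trivial_hypE He) per; have [f [n [Hf Ee]]] := edge_rep He.
have [k /andP [k0 kB] Hk] : exists2 k, 0 < k <= B & same_hyp adj Y f (map_edge (iter k phi) f).
  apply: HB Hf _ => //; case: Ee => Ee; move: per; rewrite Ee.
    by move/(periodic_map _ (iter_phi_sym n)).
  by move/(periodic_map _ (iter_psi_sym n)).
have [r rk Sr] : exists2 r, r < k & same_hyp adj Y e (map_edge (iter r phi) f).
  case: Ee => ->.
    by exists (n %% k); [apply: ltn_pmod | apply: same_hyp_iter_mod].
  exists ((n * k - n) %% k); first exact: ltn_pmod.
  exact: same_hyp_trans (same_hyp_iter_psi n k0 Hk) (same_hyp_iter_mod _ k0 Hk).
exists (map_edge (iter r phi) f); split => //.
apply/List.in_flat_map; exists f; split => //; apply: List.in_map.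
by apply/List.in_seq; lia.
Qed.

End Quasiline.

End MedianGraph.

Section DeckGroup.
Variables (V : Type) (adj : V -> V -> Prop) (Gamma : (V -> V) -> Prop).
Hypothesis deck : deck_group adj Gamma.

Lemma deck_iter g n : Gamma g -> Gamma (iter n g).
Proof.
case: deck => [[_ Gid] Gcomp _ _ _] Gg.
by elim: n => [|n IH] //=; apply: (Gcomp _ _ Gg IH).
Qed.

(* Freeness of the action, applied to a vertex seen as a 0-cube. *)
Lemma deck_fixpoint_free g c : (forall x, ~ adj x x) -> Gamma g -> g c = c ->
  forall x, g x = x.
Proof.
case: deck => _ _ _ free _ irr Gg gc x; apply: contrapT => gx.
pose f0 := fun _ : {ffun 'I_0 -> bool} => c.
apply: (free g Gg (ex_intro _ x gx) 0 f0); last by move=> a; exists a; rewrite /f0.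
split=> [a b _|a b]; first by apply/ffunP => -[].
have -> : #|[pred i | a i != b i]| = 0 by apply: eq_card0 => -[].
by split => // /irr.
Qed.

Lemma quasiline_symmetry Y phi : quasiline adj Gamma Y phi ->
  exists psi, symmetry adj Y phi phi psi.
Proof.
case=> _ Gphi _ [Yphi Ysurj] _; case: deck => [[aut _] _ _ _ _].
have [[psi phiK psiK] phi_adj] := aut phi Gphi.
exists psi; split=> // [x y /phi_adj //|x y Hxy|x /Ysurj [y [Yy <-]]|x].
- by apply/phi_adj; rewrite !psiK.
- by rewrite phiK.
- by apply: (can_inj phiK); rewrite !psiK.
Qed.

End DeckGroup.

Theorem lemma5p6 (V : Type) (adj : V -> V -> Prop)
    (Gamma : (V -> V) -> Prop) (Y : V -> Prop) (phi : V -> V) :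
  median_graph adj -> locally_finite adj -> deck_group adj Gamma ->
  quasiline adj Gamma Y phi ->
  [/\ (exists D : nat, forall D', D <= D' -> forall e, edge adj Y e ->
         ~ trivial_hyp adj Y e -> diam_le adj Y (carrier adj Y e) D'),
      (exists K : nat, forall K', K <= K' -> forall e, edge adj Y e ->
         half_essential adj Y e -> forall b : bool,
         ~ deep adj Y (orient b e) ->
         diam_le adj Y (halfspace adj Y (orient b e)) K'),
      (exists d : nat, forall d', d <= d' -> forall e, edge adj Y e ->
         essential adj Y e ->
         [/\ ~ same_hyp adj Y e (map_edge (iter d' phi) e),
             ~ crosses adj Y e (map_edge (iter d' phi) e)
           & forall e', edge adj Y e' -> crosses adj Y e' e ->
               crosses adj Y e' (map_edge (iter d' phi) e) ->
               trivial_hyp adj Y e'])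
    & (exists s : list (V * V), forall e, edge adj Y e -> trivial_hyp adj Y e ->
         exists e0, List.In e0 s /\ same_hyp adj Y e e0)].
Proof.
move=> median adj_finite deck quasi.
have [Yconvex Gphi _ _ [s [_ cocompact]]] := quasi.
have [psi phi_sym] := quasiline_symmetry deck quasi.
have free k c : iter k phi c = c -> forall x, iter k phi x = x.
  exact: (deck_fixpoint_free deck (adj_irrefl median) (deck_iter deck k Gphi)).
have [Es HEs] := edges_at_finite adj_finite s.
have [D HD] := carrier_diam_bound median Yconvex phi_sym cocompact HEs free adj_finite.
split.
- exists D => D' DD' e He Hnt.
  apply: (diam_le_of_dist Yconvex) => [x Cx|x y Cx Cy]; first exact: carrier_Y Cx.
  exact: leq_trans (HD e He Hnt x y Cx Cy) DD'.
- have [K HK] := shallow_halfspace_diam_bound Yconvex phi_sym cocompact HEs HD.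
  exists K => K' KK' e He Hhe b Hb; apply: (diam_le_of_dist Yconvex) => [x [] //|x y Hx Hy].
  exact: leq_trans (HK e He Hhe b Hb x y Hx Hy) KK'.
- exact: (essential_translate_bound Yconvex phi_sym cocompact HEs free adj_finite HD).
- exact: (trivial_hyps_finite median Yconvex phi_sym cocompact HEs free adj_finite).
Qed.
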